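(* Let $w$ be a non-degenerate 4-web on an open subset of $\mathbb{R}^3$ formed by three foliations by surfaces and one foliation by curves. Then the rank of $w$ is at most $2$.
   Context: For a web $w$ formed by foliations $\mathcal{F}_1,\dots,\mathcal{F}_d$ (leaves may have different dimensions), an abelian relation is a $d$-tuple of 1-forms $(\sigma_1,\dots,\sigma_d)$ such that each $\sigma_i$ vanishes on the leaves of $\mathcal{F}_i$, each $\sigma_i$ is closed, and $\sigma_1+\dots+\sigma_d=0$; the rank of $w$ is the dimension of the real vector space of abelian relations. Non-degenerate means: the tangent planes of the three surface foliations are in general position at each point (their conormal covectors form a basis of the cotangent space), and the tangent line of the curve foliation is, at each point, not contained in the tangent plane of any of the three surface foliations. The statement is local. *)

From HB Require Import structures.
From mathcomp Require Import all_boot all_order all_algebra.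
From mathcomp Require Import all_classical all_reals all_analysis.
Set Implicit Arguments. Unset Strict Implicit. Unset Printing Implicit Defensive.
Import Order.TTheory GRing.Theory Num.Theory.
Import numFieldNormedType.Exports.
Local Open Scope classical_set_scope.
Local Open Scope ring_scope.

(* A 1-form / covector
   field on R^3 is a map 'rV_3 -> 'rV_3 giving its components in dx_0,dx_1,dx_2;
   a vector field is likewise a map 'rV_3 -> 'rV_3. *)

Section Webs.
Variable R : realType.
Notation V := 'rV[R]_3.

Definition cov_pairing (a v : V) : R := \sum_(j < 3) a 0 j * v 0 j.

Definition partial_coord (i : 'I_3) (f : V -> R) : V -> R :=
  fun x => 'D_(delta_mx 0 i) f x.

(* C^k on U (functions are defined on all of R^3, conditions only on U) *)
Fixpoint Ck_on (U : set V) (k : nat) (f : V -> R) : Prop :=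
  match k with
  | 0 => forall x, U x -> {for x, continuous f}
  | k'.+1 => (forall x, U x -> differentiable f x) /\
             (forall i : 'I_3, Ck_on U k' (partial_coord i f))
  end.

Definition smooth_on (U : set V) (f : V -> R) : Prop := forall k, Ck_on U k f.

Definition smooth_field (U : set V) (w : V -> V) : Prop :=
  forall j : 'I_3, smooth_on U (fun x => w x 0 j).

Definition closed_form (U : set V) (w : V -> V) : Prop :=
  forall x, U x -> forall i j : 'I_3,
    partial_coord i (fun y => w y 0 j) x = partial_coord j (fun y => w y 0 i) x.

(* Frobenius integrability of the plane field ker w : w /\ dw = 0 *)
Definition frobenius_integrable (U : set V) (w : V -> V) : Prop :=
  forall x, U x ->
    let c := fun j : 'I_3 => w x 0 j in
    let d := fun i j : 'I_3 => partial_coord i (fun y => w y 0 j) x in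
    c 0 * (d 1 2 - d 2 1) + c 1 * (d 2 0 - d 0 2) + c 2 * (d 0 1 - d 1 0) = 0.

(* A foliation by surfaces on U, given by a smooth nowhere-vanishing conormal
   field w (tangent planes = ker w) satisfying the Frobenius condition. *)
Definition surface_foliation (U : set V) (w : V -> V) : Prop :=
  [/\ smooth_field U w, (forall x, U x -> w x != 0) & frobenius_integrable U w].

(* A foliation by curves on U, given by a smooth nowhere-vanishing vector field X
   (tangent lines = span X). *)
Definition curve_foliation (U : set V) (X : V -> V) : Prop :=
  smooth_field U X /\ (forall x, U x -> X x != 0).

Definition web_nondegenerate (U : set V) (w : 'I_3 -> V -> V) (X : V -> V) : Prop :=
  forall x, U x ->
    row_free (\matrix_(i < 3, j < 3) w i x 0 j) /\
    (forall i : 'I_3, cov_pairing (w i x) (X x) != 0).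

Definition is_3surf1curve_web (U : set V) (w : 'I_3 -> V -> V) (X : V -> V) : Prop :=
  (forall i, surface_foliation U (w i)) /\ curve_foliation U X.

Definition abelian_relation (U : set V) (w : 'I_3 -> V -> V) (X : V -> V)
    (sigma : 'I_4 -> V -> V) : Prop :=
  [/\ forall k, smooth_field U (sigma k),
      forall k, closed_form U (sigma k),
      forall (i : 'I_3) x v, U x -> cov_pairing (w i x) v = 0 ->
          cov_pairing (sigma (widen_ord (leqnSn 3) i) x) v = 0,
      forall x, U x -> cov_pairing (sigma ord_max x) (X x) = 0
    & forall x, U x -> \sum_(k < 4) sigma k x = 0].

Definition web_rank_le (U : set V) (w : 'I_3 -> V -> V) (X : V -> V) (n : nat) : Prop :=
  forall s : 'I_n.+1 -> 'I_4 -> V -> V,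
    (forall m, abelian_relation U w X (s m)) ->
    exists c : 'I_n.+1 -> R, (exists m, c m != 0) /\
      forall k x, U x -> \sum_(m < n.+1) c m *: s m k x = 0.

End Webs.

(* Since [sigma_i] (i < 3) vanishes on [ker omega_i], it is
   [G_i omega_i] for a function [G_i], and [sigma_3 = - sum_i sigma_i] vanishes on
   [X] exactly when [sum_i G_i omega_i(X) = 0].  The closedness of the [G_i omega_i]
   and the derivative of this identity form a linear system for [dG]: in the frame
   dual to the [omega_i], they express every first derivative of [G] linearly in [G],
   with continuous coefficients.  Hence [|G|^2] obeys a Gronwall inequality along
   segments, so the zero set of [G] is open; being closed, it is all of the connected
   [U] as soon as it is nonempty.  Given three relations, choose a nontrivial
   combination with [G_0 = G_1 = 0] at a point [x0]; then [G_2(x0) = 0] because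
   [omega_2(X) <> 0], so the combination vanishes identically. *)
From HB Require Import structures.
From mathcomp Require Import all_boot all_order all_algebra.
From mathcomp Require Import all_classical all_reals all_analysis.
Import numFieldNormedType.Exports.
From mathcomp Require Import ring lra.
Set Implicit Arguments. Unset Strict Implicit. Unset Printing Implicit Defensive.
Import Order.TTheory GRing.Theory Num.Theory.
Local Open Scope classical_set_scope.
Local Open Scope ring_scope.

Definition o0 : 'I_3 := @Ordinal 3 0 isT.
Definition o1 : 'I_3 := @Ordinal 3 1 isT.
Definition o2 : 'I_3 := @Ordinal 3 2 isT.

Lemma big_ord3 (M : nmodType) (F : 'I_3 -> M) :
  \sum_(i < 3) F i = F o0 + F o1 + F o2.
Proof.
rewrite !big_ord_recr big_ord0 /= add0r.
by congr (F _ + F _ + F _); apply: val_inj.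
Qed.

Lemma sum_mul_delta (R : pzSemiRingType) n (F : 'I_n -> R) (a : 'I_n) :
  \sum_(c < n) F c * (c == a)%:R = F a.
Proof.
rewrite (bigD1 a) //= eqxx mulr1 big1 ?addr0 // => c /negPf ->.
by rewrite mulr0.
Qed.

Section CovPairing.
Variable R : realType.
Local Notation V := 'rV[R]_3.

Lemma cov_pairing_delta (a : V) b : cov_pairing a (delta_mx 0 b) = a 0 b.
Proof.
rewrite /cov_pairing (bigD1 b) //= mxE !eqxx mulr1 big1 ?addr0 // => j /negPf jb.
by rewrite mxE jb andbF mulr0.
Qed.

Lemma cov_pairing0l (u : V) : cov_pairing 0 u = 0.
Proof. by rewrite /cov_pairing big1 // => j _; rewrite mxE mul0r. Qed.

Lemma cov_pairingDl (a b u : V) :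
  cov_pairing (a + b) u = cov_pairing a u + cov_pairing b u.
Proof. by rewrite /cov_pairing !big_ord3 !mxE; ring. Qed.

Lemma cov_pairingZl (a u : V) (k : R) : cov_pairing (k *: a) u = k * cov_pairing a u.
Proof. by rewrite /cov_pairing !big_ord3 !mxE; ring. Qed.

Lemma cov_pairing_suml (I : Type) (r : seq I) (F : I -> V) u :
  cov_pairing (\sum_(i <- r) F i) u = \sum_(i <- r) cov_pairing (F i) u.
Proof.
elim: r => [|x r ih]; first by rewrite !big_nil cov_pairing0l.
by rewrite !big_cons cov_pairingDl ih.
Qed.

Lemma cov_pairingZBr (a u v : V) (k1 k2 : R) :
  cov_pairing a (k1 *: u - k2 *: v) = k1 * cov_pairing a u - k2 * cov_pairing a v.
Proof. by rewrite /cov_pairing !big_ord3 !mxE; ring. Qed.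

End CovPairing.

Section Differentiation.
Context {R : numFieldType} {V : normedModType R}.

Lemma differentiable_mul (f g : V -> R) x : differentiable f x -> differentiable g x ->
  differentiable (fun z => f z * g z) x.
Proof. by move=> hf hg; have := differentiableM hf hg. Qed.

Lemma differentiable_big_sum n (F : 'I_n -> V -> R) x :
  (forall i, differentiable (F i) x) ->
  differentiable (fun z => \sum_(i < n) F i z) x.
Proof. by move=> h; have := differentiable_sum h; rewrite fct_sumE. Qed.

Lemma derive_mul (f g : V -> R) x v : differentiable f x -> differentiable g x ->
  'D_v (fun z => f z * g z) x = f x * 'D_v g x + g x * 'D_v f x.
Proof. by move=> /diff_derivable hf /diff_derivable hg; rewrite deriveM. Qed.

Lemma derive_big_sum n (F : 'I_n -> V -> R) x v :
  (forall i, differentiable (F i) x) ->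
  'D_v (fun z => \sum_(i < n) F i z) x = \sum_(i < n) 'D_v (F i) x.
Proof. by move=> h; rewrite -fct_sumE derive_sum // => i; exact: diff_derivable. Qed.

End Differentiation.

Lemma derive_partial_coord (R : realType) (f : 'rV[R]_3 -> R) x v :
  differentiable f x -> 'D_v f x = \sum_(a < 3) v 0 a * partial_coord a f x.
Proof.
move=> hf; rewrite deriveE // {1}(row_sum_delta v) linear_sum.
by apply: eq_bigr => a _; rewrite linearZ /partial_coord deriveE.
Qed.

Section ContinuityBig.
Context {K : numFieldType} {T : topologicalType}.

Lemma continuous_norm (f : T -> K) x :
  {for x, continuous f} -> {for x, continuous (fun y => `|f y|)}.
Proof. by move=> h; apply: cvg_norm. Qed.

Lemma continuous_big_sum (I : Type) (r : seq I) (P : pred I) (F : I -> T -> K) x :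
  (forall i, P i -> {for x, continuous (F i)}) ->
  {for x, continuous (fun y => \sum_(i <- r | P i) F i y)}.
Proof.
move=> h; elim: r => [|a r ih].
  rewrite (_ : (fun y => _) = cst 0); first exact: cst_continuous.
  by apply/funext => y; rewrite big_nil.
rewrite (_ : (fun y => _) = fun y => if P a then F a y + \sum_(i <- r | P i) F i y
                                     else \sum_(i <- r | P i) F i y); last first.
  by apply/funext => y; rewrite big_cons.
by case: (boolP (P a)) => // Pa; apply: continuousD => //; exact: h.
Qed.

Lemma continuous_big_prod (I : Type) (r : seq I) (P : pred I) (F : I -> T -> K) x :
  (forall i, P i -> {for x, continuous (F i)}) ->
  {for x, continuous (fun y => \prod_(i <- r | P i) F i y)}.
Proof.
move=> h; elim: r => [|a r ih].
  rewrite (_ : (fun y => _) = cst 1); first exact: cst_continuous.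
  by apply/funext => y; rewrite big_nil.
rewrite (_ : (fun y => _) = fun y => if P a then F a y * \prod_(i <- r | P i) F i y
                                     else \prod_(i <- r | P i) F i y); last first.
  by apply/funext => y; rewrite big_cons.
by case: (boolP (P a)) => // Pa; apply: continuousM => //; exact: h.
Qed.

Lemma continuous_det n (M : T -> 'M[K]_n) x :
  (forall i j, {for x, continuous (fun y => M y i j)}) ->
  {for x, continuous (fun y => \det (M y))}.
Proof.
move=> h; apply: continuous_big_sum => s _; apply: continuousM; first exact: cst_continuous.
by apply: continuous_big_prod => i _; exact: h.
Qed.

Lemma continuous_adj n (M : T -> 'M[K]_n) x :
  (forall i j, {for x, continuous (fun y => M y i j)}) ->
  forall i j, {for x, continuous (fun y => \adj (M y) i j)}.
Proof.
move=> h i j; rewrite (_ : (fun y => _) = fun y => cofactor (M y) j i); last first.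
  by apply/funext => y; rewrite mxE.
apply: continuousM; first exact: cst_continuous.
apply: continuous_det => a b.
rewrite (_ : (fun y => _) = fun y => M y (lift j a) (lift i b)); first exact: h.
by apply/funext => y; rewrite !mxE.
Qed.

End ContinuityBig.

Lemma gronwall01 (R : realType) (g dg : R -> R) (K : R) :
  (forall t : R, t \in `]0, 1[%R -> is_derive t 1 g (dg t)) ->
  {within `[0, 1], continuous g} ->
  (forall t : R, t \in `]0, 1[%R -> dg t <= K * g t) ->
  g 0 = 0 -> (forall t : R, t \in `[0, 1]%R -> 0 <= g t) -> g 1 = 0.
Proof.
move=> gder gcont gle g0 gge0.
pose e (t : R) := expR (- K * t).
pose h (t : R) := g t * e t.
have eder (t : R) : is_derive t 1 e (expR (- K * t) * (- K)).
  rewrite /e (_ : (fun t => expR (- K * t)) = expR \o ( *%R (- K))) //.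
  apply: is_derive1_comp.
  rewrite (_ : ( *%R (- K)) = cst (- K) * id) //.
  apply: (is_derive_eq (is_deriveM (is_derive_cst (- K) t 1) (is_derive_id t 1))).
  by rewrite /cst /GRing.scale /= mulr1 mulr0 addr0.
have hder (t : R) : t \in `]0, 1[%R ->
    is_derive t 1 h (g t * (expR (- K * t) * (- K)) + e t * dg t).
  move=> tin; rewrite (_ : h = g * e) //.
  apply: (is_derive_eq (is_deriveM (gder _ tin) (eder t))).
  by rewrite /GRing.scale /= mulrC.
have hcont : {within `[0, 1], continuous h}.
  move=> x; apply: continuousM; first exact: gcont.
  apply: (@continuous_subspaceT _ _ _ e) => y.
  apply: continuous_comp; last exact: continuous_expR.
  by apply: continuousM; [exact: cvg_cst | exact: cvg_id].
have [c cin hc] := MVT ltr01 hder hcont.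
(* [h = g e^{-Kt}] is nonincreasing: [h' = e^{-Kt} (g' - K g) <= 0]. *)
have h1_le0 : h 1 <= 0.
  have h0 : h 0 = 0 by rewrite /h g0 mul0r.
  rewrite -[h 1]subr0 -{1}h0 hc subr0 mulr1.
  have ec_gt0 : 0 < e c by exact: expR_gt0.
  rewrite (_ : _ + _ = e c * (dg c - K * g c)); last by rewrite /e; ring.
  by apply: mulr_ge0_le0; [exact: ltW | rewrite subr_le0; exact: gle].
apply/eqP; rewrite eq_le gge0 ?andbT; last by rewrite in_itv /= lexx ler01.
by move: h1_le0; rewrite /h pmulr_lle0 // expR_gt0.
Qed.

Section Segment.
Context {R : realType} {V : normedModType R}.

Lemma is_derive_segment (f : V -> R) (p v : V) (t0 : R) :
  derivable f (p + t0 *: v) v ->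
  is_derive t0 1 (fun t : R => f (p + t *: v)) ('D_v f (p + t0 *: v)).
Proof.
move=> df.
have E : (fun h : R => h^-1 *: (((fun t : R => f (p + t *: v)) \o shift t0) (h *: 1)
            - f (p + t0 *: v))) =
         (fun h : R => h^-1 *: ((f \o shift (p + t0 *: v)) (h *: v) - f (p + t0 *: v))).
  apply/funext => h /=; congr (_ *: (f _ - _)).
  by rewrite /shift /= [h *: (1:R)]/GRing.scale /= mulr1 scalerDl addrCA addrA.
by split; [rewrite /derivable E | rewrite /derive E].
Qed.

Lemma segment_gronwall (f : V -> R) (x v : V) (K : R) :
  (forall t : R, t \in `[0, 1]%R -> differentiable f (x + t *: v)) ->
  (forall t : R, t \in `[0, 1]%R -> 'D_v f (x + t *: v) <= K * f (x + t *: v)) ->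
  (forall t : R, t \in `[0, 1]%R -> 0 <= f (x + t *: v)) ->
  f x = 0 -> f (x + v) = 0.
Proof.
move=> fdiff fle fge0 fx0.
have fder (t : R) : t \in `[0, 1]%R ->
    is_derive t 1 (fun t => f (x + t *: v)) ('D_v f (x + t *: v)).
  by move=> tin; apply/is_derive_segment/diff_derivable/fdiff.
have fcont : {within `[0, 1], continuous (fun t => f (x + t *: v))}.
  apply: continuous_in_subspaceT => t; rewrite inE => tin.
  have [dd _] := fder t tin.
  by apply/differentiable_continuous/derivable1_diffP.
have := @gronwall01 R _ _ K (fun t tin => fder t (subset_itv_oo_cc tin)) fcont.
rewrite scale0r addr0 scale1r; apply=> // t tin.
exact/fle/subset_itv_oo_cc.
Qed.

End Segment.

Lemma connected_zero_set (R : numFieldType) (T : topologicalType) (U : set T)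
    (f : T -> R) :
  open U -> connected U -> (forall x, U x -> {for x, continuous f}) ->
  (forall x, U x -> f x = 0 -> \forall y \near x, f y = 0) ->
  forall x0, U x0 -> f x0 = 0 -> forall y, U y -> f y = 0.
Proof.
move=> Uopen Uconn fcont fzero x0 Ux0 fx0.
pose Z := [set y | U y /\ f y = 0].
have UZ : Z = U.
  apply: Uconn; first by exists x0.
  - exists Z; last by rewrite setIidr // => y [].
    rewrite openE => y [Uy fy]; rewrite /interior.
    by near=> z; split; near: z; [exact: open_nbhs_nbhs | exact: fzero].
  - exists (~` [set y | U y /\ f y != 0]).
      apply: open_closedC; rewrite openE => y [Uy fy]; rewrite /interior.
      by near=> z; split; near: z;
        [exact: open_nbhs_nbhs | exact: (cvgr_neq0 _ (fcont _ Uy) fy)].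
    apply/seteqP; split => y /=.
      by move=> [Uy fy]; split => // -[_]; rewrite fy eqxx.
    by move=> [Uy nz]; split => //; apply/eqP; apply: contra_notT nz.
by move=> y; rewrite -UZ => -[].
Unshelve. all: by end_near.
Qed.

(* Pointwise linear algebra of a relation [G_i omega_i] at one point: [omega i b]
   is the [b]-th component of the conormal [omega_i], [frame j] the dual frame,
   [A i = omega_i(X)], [dA k a = d_a A_k], [domega i a b = d_a omega_i^b], and
   [dG i a = d_a G_i]. *)
Section FrameAlgebra.
Variable R : fieldType.
Variables (omega frame : 'I_3 -> 'I_3 -> R) (A : 'I_3 -> R) (dA : 'I_3 -> 'I_3 -> R).
Variables (domega : 'I_3 -> 'I_3 -> 'I_3 -> R) (G : 'I_3 -> R) (dG : 'I_3 -> 'I_3 -> R).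

Definition curl_frame i j :=
  \sum_(a < 3) \sum_(b < 3) frame j a * frame i b * (domega i b a - domega i a b).
Definition dA_frame k i := \sum_(a < 3) frame i a * dA k a.
Definition frame_coef i j k :=
  if j == i then - ((if k == i then 0 else A k * curl_frame k i) + dA_frame k i) / A i
  else (if k == i then curl_frame i j else 0).
Definition deriv_coef i a k := \sum_(j < 3) omega j a * frame_coef i j k.

Hypothesis omega_frame : forall i j, \sum_(b < 3) omega i b * frame j b = (i == j)%:R.
Hypothesis frame_omega : forall c a, \sum_(j < 3) frame j c * omega j a = (c == a)%:R.
Hypothesis A_neq0 : forall i, A i != 0.
Hypothesis G_closed : forall i a b,
  dG i a * omega i b + G i * domega i a b = dG i b * omega i a + G i * domega i b a.
Hypothesis G_dsum : forall a, \sum_(k < 3) (dG k a * A k + G k * dA k a) = 0.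

Let dG_frame i j := \sum_(a < 3) dG i a * frame j a.

Lemma dG_frame_expand i a : dG i a = \sum_(j < 3) omega j a * dG_frame i j.
Proof.
rewrite -[LHS](sum_mul_delta (dG i)).
under eq_bigr do rewrite -frame_omega.
by rewrite /dG_frame !big_ord3; ring.
Qed.

Lemma dG_frame_offdiag i j : j != i -> dG_frame i j = G i * curl_frame i j.
Proof.
move=> ji.
have : \sum_(a < 3) \sum_(b < 3) frame j a * frame i b *
     ((dG i a * omega i b + G i * domega i a b) - (dG i b * omega i a + G i * domega i b a)) = 0.
  by apply: big1 => a _; apply: big1 => b _; rewrite G_closed subrr mulr0.
rewrite (_ : \sum_(a < 3) _ = dG_frame i j * (\sum_(b < 3) omega i b * frame i b)
    - (\sum_(b < 3) omega i b * frame j b) * dG_frame i i - G i * curl_frame i j).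
  rewrite !omega_frame eqxx [i == j]eq_sym (negPf ji) mulr1 mul0r subr0.
  by move/eqP; rewrite subr_eq0 => /eqP.
by rewrite /dG_frame /curl_frame !big_ord3; ring.
Qed.

Lemma dG_frame_sum i : \sum_(k < 3) (A k * dG_frame k i + G k * dA_frame k i) = 0.
Proof.
have : \sum_(a < 3) frame i a * \sum_(k < 3) (dG k a * A k + G k * dA k a) = 0.
  by apply: big1 => a _; rewrite G_dsum mulr0.
by move=> h; rewrite -[RHS]h /dG_frame /dA_frame !big_ord3; ring.
Qed.

Lemma dG_frame_lincomb i j : dG_frame i j = \sum_(k < 3) frame_coef i j k * G k.
Proof.
rewrite /frame_coef; have [->|ji] := eqVneq j i; last first.
  rewrite (bigD1 i) //= eqxx big1 ?addr0; last by move=> k /negPf ->; rewrite mul0r.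
  by rewrite dG_frame_offdiag // mulrC.
pose c k := (if k == i then 0 else A k * curl_frame k i) + dA_frame k i.
have sum_i : A i * dG_frame i i + \sum_(k < 3) c k * G k = 0.
  rewrite -[RHS](dG_frame_sum i) (bigD1 i) //= [in RHS](bigD1 i) //= /c eqxx add0r.
  rewrite addrA [_ * G i]mulrC; congr (_ + _); apply: eq_bigr => k ki.
  by rewrite (negPf ki) dG_frame_offdiag 1?eq_sym //; ring.
apply: (mulfI (A_neq0 i)); move/eqP: sum_i; rewrite addr_eq0 => /eqP ->.
rewrite mulr_sumr -sumrN; apply: eq_bigr => k _.
rewrite /c; field; exact: A_neq0.
Qed.

Lemma dG_lincomb i a : dG i a = \sum_(k < 3) deriv_coef i a k * G k.
Proof.
rewrite dG_frame_expand; under eq_bigr do rewrite dG_frame_lincomb.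
by rewrite /deriv_coef !big_ord3; ring.
Qed.

End FrameAlgebra.

Lemma trilinear_sum_le (R : realFieldType) (G v : 'I_3 -> R) (L : 'I_3 -> 'I_3 -> 'I_3 -> R) :
  \sum_(i < 3) 2 * G i * (\sum_(a < 3) v a * \sum_(k < 3) L i a k * G k) <=
  (\sum_(a < 3) `|v a|) * (2 * \sum_(i < 3) \sum_(a < 3) \sum_(k < 3) `|L i a k|)
    * (\sum_(i < 3) G i * G i).
Proof.
set W := \sum_(a < 3) `|v a|.
set P := \sum_(i < 3) G i * G i.
have term_le (F : 'I_3 -> R) j : (forall i, 0 <= F i) -> F j <= \sum_(i < 3) F i.
  by move=> h; rewrite (bigD1 j) //= lerDl; apply: sumr_ge0 => i _; exact: h.
have vW a : `|v a| <= W by apply: term_le => j; exact: normr_ge0.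
have GP i k : `|G i| * `|G k| <= P.
  have sqG j : G j * G j = `|G j| * `|G j| by rewrite -normrM ger0_norm // -expr2 sqr_ge0.
  have [hi hk] : G i * G i <= P /\ G k * G k <= P.
    by split; apply: term_le => j; rewrite -expr2 sqr_ge0.
  have := normr_ge0 (G i); have := normr_ge0 (G k).
  rewrite sqG in hi; rewrite sqG in hk; nra.
rewrite (_ : \sum_(i < 3) _ = \sum_(i < 3) \sum_(a < 3) \sum_(k < 3)
    (2 * G i * v a * L i a k * G k)); last by rewrite !big_ord3; ring.
rewrite (_ : W * _ * P = \sum_(i < 3) \sum_(a < 3) \sum_(k < 3)
    (2 * `|L i a k| * (W * P))); last by rewrite !big_ord3; ring.
apply: ler_sum => i _; apply: ler_sum => a _; apply: ler_sum => k _.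
apply: le_trans (ler_norm _) _.
rewrite !normrM (ger0_norm (_ : (0:R) <= 2)) //.
have vGWP : `|v a| * (`|G i| * `|G k|) <= W * P.
  by apply: ler_pM => //; exact: mulr_ge0.
have := normr_ge0 (L i a k); have := normr_ge0 (v a); have := normr_ge0 (G i).
have := normr_ge0 (G k); nra.
Qed.

Section Relation.
Variable R : realType.
Local Notation V := 'rV[R]_3.
Variables (U : set V) (w : 'I_3 -> V -> V) (X : V -> V) (tau : 'I_4 -> V -> V).
Local Notation sigma i := (tau (widen_ord (leqnSn 3) i)).

Hypothesis U_open : open U.
Hypothesis w_smooth : forall i, smooth_field U (w i).
Hypothesis X_smooth : smooth_field U X.
Hypothesis web_nd : web_nondegenerate U w X.

Hypothesis sigma_diff : forall i b y, U y -> differentiable (fun z => sigma i z 0 b) y.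
Hypothesis sigma_closed : forall i, closed_form U (sigma i).
Hypothesis sigma_annihilates : forall i y v, U y ->
  cov_pairing (w i y) v = 0 -> cov_pairing (sigma i y) v = 0.
Hypothesis tau_curve : forall y, U y -> cov_pairing (tau ord_max y) (X y) = 0.
Hypothesis tau_sum : forall y, U y -> \sum_(k < 4) tau k y = 0.

Lemma sum_sigma_X y : U y -> \sum_(i < 3) cov_pairing (sigma i y) (X y) = 0.
Proof.
move=> Uy; have := congr1 (fun a => cov_pairing a (X y)) (tau_sum Uy).
by rewrite big_ord_recr /= cov_pairingDl cov_pairing_suml cov_pairing0l tau_curve // addr0.
Qed.

Definition omegaX i y := cov_pairing (w i y) (X y).

(* [coef i] is the function [G_i] with [sigma_i = G_i omega_i]. *)
Definition coef i y := cov_pairing (sigma i y) (X y) / omegaX i y.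

Lemma near_U y : U y -> \forall z \near y, U z.
Proof. by move=> Uy; apply: open_nbhs_nbhs. Qed.

Lemma omegaX_neq0 i y : U y -> omegaX i y != 0.
Proof. by move=> Uy; have [_ +] := web_nd Uy; apply. Qed.

Lemma sigma_factor i y u : U y ->
  cov_pairing (sigma i y) u = coef i y * cov_pairing (w i y) u.
Proof.
move=> Uy; have A0 := omegaX_neq0 i Uy.
(* [omega_i(X) u - omega_i(u) X] lies in the kernel of [omega_i]. *)
have ann := @sigma_annihilates i y (omegaX i y *: u - cov_pairing (w i y) u *: X y) Uy.
move: ann; rewrite !cov_pairingZBr => /(_ _)/eqP.
rewrite subr_eq0 mulrC => /(_ (subrr _)) /eqP h.
rewrite /coef; apply: (mulfI A0).
by rewrite h [RHS]mulrA (mulrCA (omegaX i y)) mulfV // mulr1 mulrC.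
Qed.

Lemma sigma_factor_comp i y b : U y -> sigma i y 0 b = coef i y * w i y 0 b.
Proof. by move=> Uy; rewrite -!cov_pairing_delta sigma_factor. Qed.

Lemma w_diff i b y : U y -> differentiable (fun z => w i z 0 b) y.
Proof. by move=> Uy; have [h _] := w_smooth i b 1%N; exact: h. Qed.

Lemma X_diff b y : U y -> differentiable (fun z => X z 0 b) y.
Proof. by move=> Uy; have [h _] := X_smooth b 1%N; exact: h. Qed.

Lemma w_partial_cont i a b y : U y ->
  {for y, continuous (partial_coord a (fun z => w i z 0 b))}.
Proof. by move=> Uy; have [_ h] := w_smooth i b 1%N; exact: h. Qed.

Lemma X_partial_cont a b y : U y -> {for y, continuous (partial_coord a (fun z => X z 0 b))}.
Proof. by move=> Uy; have [_ h] := X_smooth b 1%N; exact: h. Qed.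

Lemma omegaX_diff i y : U y -> differentiable (omegaX i) y.
Proof.
move=> Uy; apply: differentiable_big_sum => j.
by apply: differentiable_mul; [exact: w_diff | exact: X_diff].
Qed.

Lemma coef_diff i y : U y -> differentiable (coef i) y.
Proof.
move=> Uy; apply: differentiable_mul.
  apply: differentiable_big_sum => j.
  by apply: differentiable_mul; [exact: sigma_diff | exact: X_diff].
by apply: differentiableV; [exact: omegaX_diff | exact: omegaX_neq0].
Qed.

Lemma partial_sigma i a b y : U y ->
  partial_coord a (fun z => sigma i z 0 b) y =
  partial_coord a (coef i) y * w i y 0 b + coef i y * partial_coord a (fun z => w i z 0 b) y.
Proof.
move=> Uy; rewrite /partial_coord.
rewrite (@near_eq_derive _ _ _ _ (fun z => coef i z * w i z 0 b)); last first.
  by apply: filterS (near_U Uy) => z Uz; exact: sigma_factor_comp.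
rewrite derive_mul; [|exact: coef_diff|exact: w_diff].
by rewrite addrC [w i y 0 b * _]mulrC.
Qed.

Definition d_omegaX k a y := \sum_(b < 3)
  (partial_coord a (fun z => w k z 0 b) y * X y 0 b
   + w k y 0 b * partial_coord a (fun z => X z 0 b) y).

Lemma partial_omegaX k a y : U y -> partial_coord a (omegaX k) y = d_omegaX k a y.
Proof.
move=> Uy; rewrite /omegaX /cov_pairing /partial_coord derive_big_sum; last first.
  by move=> j; apply: differentiable_mul; [exact: w_diff | exact: X_diff].
apply: eq_bigr => j _; rewrite derive_mul; [|exact: w_diff|exact: X_diff].
by rewrite /partial_coord addrC [X y 0 j * _]mulrC.
Qed.

Lemma partial_sum_coef_omegaX a y : U y ->
  \sum_(k < 3) (partial_coord a (coef k) y * omegaX k y + coef k y * d_omegaX k a y) = 0.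
Proof.
move=> Uy.
have sum0 : partial_coord a (fun z => \sum_(k < 3) coef k z * omegaX k z) y = 0.
  rewrite /partial_coord (@near_eq_derive _ _ _ _ (cst 0)) ?derive_cst //.
  apply: filterS (near_U Uy) => z Uz; rewrite /cst -[RHS](sum_sigma_X Uz).
  by apply: eq_bigr => k _; rewrite /coef mulfVK // omegaX_neq0.
rewrite -[RHS]sum0 /partial_coord derive_big_sum => [|k]; last first.
  by apply: differentiable_mul; [exact: coef_diff | exact: omegaX_diff].
apply: eq_bigr => k _.
rewrite [RHS]derive_mul; [|exact: coef_diff|exact: omegaX_diff].
by rewrite -partial_omegaX // addrC [_ * omegaX k y]mulrC.
Qed.

Definition conormal_mx y := \matrix_(i < 3, j < 3) w i y 0 j.
Definition dual_frame y (j b : 'I_3) := \adj (conormal_mx y) b j / \det (conormal_mx y).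

Lemma det_conormal_neq0 y : U y -> \det (conormal_mx y) != 0.
Proof. by move=> Uy; have [+ _] := web_nd Uy; rewrite row_free_unit unitmxE unitfE. Qed.

Lemma conormal_dual_frame y i j : U y ->
  \sum_(b < 3) w i y 0 b * dual_frame y j b = (i == j)%:R.
Proof.
move=> Uy; have d0 := det_conormal_neq0 Uy.
have := congr1 (fun M : 'M[R]_3 => M i j) (mul_mx_adj (conormal_mx y)).
rewrite !mxE /= => h; apply: (mulfI d0).
rewrite mulr_sumr mulr_natr -h; apply: eq_bigr => b _.
by rewrite /dual_frame mxE [conormal_mx y i b]mxE; field.
Qed.

Lemma dual_frame_conormal y c a : U y ->
  \sum_(j < 3) dual_frame y j c * w j y 0 a = (c == a)%:R.
Proof.
move=> Uy; have d0 := det_conormal_neq0 Uy.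
have := congr1 (fun M : 'M[R]_3 => M c a) (mul_adj_mx (conormal_mx y)).
rewrite !mxE /= => h; apply: (mulfI d0).
rewrite mulr_sumr mulr_natr -h; apply: eq_bigr => j _.
by rewrite /dual_frame mxE [conormal_mx y j a]mxE; field.
Qed.

Definition coef_jacobian y := deriv_coef (fun i b => w i y 0 b) (dual_frame y)
  (fun i => omegaX i y) (fun k a => d_omegaX k a y)
  (fun i a b => partial_coord a (fun z => w i z 0 b) y).

Lemma partial_coef y i a : U y ->
  partial_coord a (coef i) y = \sum_(k < 3) coef_jacobian y i a k * coef k y.
Proof.
move=> Uy; apply: (dG_lincomb (G := fun k => coef k y)
  (dG := fun i a => partial_coord a (coef i) y)).
- by move=> i' j; exact: conormal_dual_frame.
- by move=> c a'; exact: dual_frame_conormal.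
- by move=> i'; exact: omegaX_neq0.
- by move=> i' a' b /=; rewrite -!partial_sigma //; exact: sigma_closed.
- by move=> a'; exact: partial_sum_coef_omegaX.
Qed.

Definition coef_sqnorm y := \sum_(i < 3) coef i y * coef i y.

Lemma coef_sqnorm_ge0 y : 0 <= coef_sqnorm y.
Proof. by apply: sumr_ge0 => i _; rewrite -expr2 sqr_ge0. Qed.

Lemma coef_sqnorm_diff y : U y -> differentiable coef_sqnorm y.
Proof.
move=> Uy; apply: differentiable_big_sum => i.
by apply: differentiable_mul; exact: coef_diff.
Qed.

Definition coef_bound y :=
  2 * \sum_(i < 3) \sum_(a < 3) \sum_(k < 3) `|coef_jacobian y i a k|.

Lemma derive_coef_sqnorm y v : U y ->
  'D_v coef_sqnorm y = \sum_(i < 3) 2 * coef i y *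
    (\sum_(a < 3) v 0 a * \sum_(k < 3) coef_jacobian y i a k * coef k y).
Proof.
move=> Uy; rewrite /coef_sqnorm derive_big_sum => [|i]; last first.
  by apply: differentiable_mul; exact: coef_diff.
apply: eq_bigr => i _; rewrite derive_mul; [|exact: coef_diff|exact: coef_diff].
rewrite derive_partial_coord; last exact: coef_diff.
under eq_bigr do rewrite (partial_coef _ _ Uy).
ring.
Qed.

Lemma derive_coef_sqnorm_le y v : U y ->
  'D_v coef_sqnorm y <= (\sum_(a < 3) `|v 0 a|) * coef_bound y * coef_sqnorm y.
Proof. by move=> Uy; rewrite derive_coef_sqnorm //; exact: trilinear_sum_le. Qed.

Lemma w_cont i b y : U y -> {for y, continuous (fun z => w i z 0 b)}.
Proof. by move=> Uy; exact/differentiable_continuous/w_diff. Qed.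

Lemma X_cont b y : U y -> {for y, continuous (fun z => X z 0 b)}.
Proof. by move=> Uy; exact/differentiable_continuous/X_diff. Qed.

Lemma omegaX_cont i y : U y -> {for y, continuous (omegaX i)}.
Proof. by move=> Uy; exact/differentiable_continuous/omegaX_diff. Qed.

Lemma coef_sqnorm_cont y : U y -> {for y, continuous coef_sqnorm}.
Proof. by move=> Uy; exact/differentiable_continuous/coef_sqnorm_diff. Qed.

Lemma dual_frame_cont j b y : U y -> {for y, continuous (fun z => dual_frame z j b)}.
Proof.
move=> Uy; have M_cont i k : {for y, continuous (fun z => conormal_mx z i k)}.
  rewrite (_ : (fun z => _) = fun z => w i z 0 k); first exact: w_cont.
  by apply/funext => z; rewrite mxE.
apply: continuousM; first exact: continuous_adj.
by apply: continuousV; [exact: det_conormal_neq0 | exact: continuous_det].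
Qed.

Ltac continuity_step :=
  lazymatch goal with
  | |- {for _, continuous (fun z => \sum_(_ <- _ | _) _)} =>
      apply: continuous_big_sum => ? _
  | |- {for _, continuous (fun z => @?f z + @?g z)} => apply: (continuousD (f := f) (g := g))
  | |- {for _, continuous (fun z => - @?f z)} => apply: (continuousN (f := f))
  | |- {for _, continuous (fun z => @?f z * @?g z)} => apply: (continuousM (s := f) (t := g))
  | |- {for _, continuous (fun z => (@?f z)^-1)} =>
      apply: (continuousV (s := f)); first by apply: omegaX_neq0
  | |- {for _, continuous ?f} =>
      lazymatch f with
      | context [d_omegaX] => rewrite /d_omegaX
      | context [partial_coord] =>
          lazymatch f with
          | context [X] => by apply: X_partial_cont
          | _ => by apply: w_partial_cont
          end
      | context [dual_frame] => by apply: dual_frame_cont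
      | context [omegaX] => by apply: omegaX_cont
      | context [w] => by apply: w_cont
      | context [X] => by apply: X_cont
      | _ => exact: cst_continuous
      end
  end.

Lemma coef_jacobian_cont i a k y : U y ->
  {for y, continuous (fun z => coef_jacobian z i a k)}.
Proof.
move=> Uy; apply: continuous_big_sum => j _; apply: continuousM; first exact: w_cont.
rewrite /frame_coef; case: (j == i); case: (k == i); rewrite /curl_frame /dA_frame /=.
all: by repeat continuity_step.
Qed.

Lemma coef_bound_cont y : U y -> {for y, continuous coef_bound}.
Proof.
move=> Uy; apply: continuousM; first exact: cst_continuous.
do 3 (apply: continuous_big_sum => ? _).
by apply: continuous_norm; apply: coef_jacobian_cont.
Qed.

Lemma coef_sqnorm_zero_near x : U x -> coef_sqnorm x = 0 ->
  \forall y \near x, coef_sqnorm y = 0.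
Proof.
move=> Ux sqx0; set B := coef_bound x + 1.
have : \forall y \near x, U y /\ coef_bound y < B.
  near=> y; split; near: y; first exact: near_U.
  by apply: cvgr_lt; [exact: coef_bound_cont | rewrite ltrDl ltr01].
move=> /nbhs_normP[r r0 ball_r]; apply/nbhs_normP; exists r => // y xy.
have seg (t : R) : t \in `[0, 1]%R ->
    U (x + t *: (y - x)) /\ coef_bound (x + t *: (y - x)) < B.
  rewrite in_itv /= => /andP[t0 t1]; apply: ball_r => /=.
  rewrite opprD addrA subrr add0r normrN normrZ ger0_norm // distrC.
  by apply: le_lt_trans xy; rewrite ler_piMl.
rewrite /= -(subrKC x y).
apply: (segment_gronwall (K := (\sum_(a < 3) `|(y - x) 0 a|) * B)) => // t /seg[Ut Bt].
- exact: coef_sqnorm_diff.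
- apply: le_trans (derive_coef_sqnorm_le _ Ut) _.
  apply: ler_wpM2r; first exact: coef_sqnorm_ge0.
  by apply: ler_wpM2l; [apply: sumr_ge0 => a _ | exact: ltW].
- exact: coef_sqnorm_ge0.
Unshelve. all: by end_near.
Qed.

Lemma coef_eq0 y : coef_sqnorm y = 0 -> forall i, coef i y = 0.
Proof.
move=> /psumr_eq0P sq0 i; apply/eqP.
by rewrite -[_ == 0]orbb -mulf_eq0 sq0 // => j _; rewrite -expr2 sqr_ge0.
Qed.

Lemma tau_vanishes x0 : connected U -> U x0 -> coef o0 x0 = 0 -> coef o1 x0 = 0 ->
  forall k y, U y -> tau k y = 0.
Proof.
move=> U_conn Ux0 c0 c1.
have c2 : coef o2 x0 = 0.
  move: (sum_sigma_X Ux0); rewrite big_ord3 !sigma_factor // c0 c1 !mul0r !add0r.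
  by move/eqP; rewrite mulf_eq0 (negPf (omegaX_neq0 o2 Ux0)) orbF => /eqP.
have sq0 : forall y, U y -> coef_sqnorm y = 0.
  apply: (connected_zero_set U_open U_conn coef_sqnorm_cont coef_sqnorm_zero_near Ux0).
  by rewrite /coef_sqnorm big_ord3 c0 c1 c2 !mul0r !addr0.
have sigma0 i y : U y -> sigma i y = 0.
  move=> Uy; apply/rowP => b.
  by rewrite mxE sigma_factor_comp // (coef_eq0 (sq0 y Uy)) mul0r.
move=> k y Uy; have [k3|] := ltnP k 3.
  by rewrite (_ : k = widen_ord (leqnSn 3) (Ordinal k3)) ?sigma0 //; exact: val_inj.
rewrite leq_eqVlt ltnNge -ltnS ltn_ord orbF => /eqP k3.
have := tau_sum Uy; rewrite big_ord_recr /= big1 ?add0r => [|i _]; last exact: sigma0.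
by rewrite (_ : k = ord_max) //; exact: val_inj.
Qed.

End Relation.

Section LinearCombination.
Variable R : realType.
Local Notation V := 'rV[R]_3.
Variables (U : set V) (w : 'I_3 -> V -> V) (X : V -> V) (n : nat).
Variables (s : 'I_n -> 'I_4 -> V -> V) (c : 'I_n -> R).
Hypothesis s_rel : forall m, abelian_relation U w X (s m).

Definition lincomb k x := \sum_(m < n) c m *: s m k x.

Lemma lincomb_comp k x b : lincomb k x 0 b = \sum_(m < n) c m * s m k x 0 b.
Proof. by rewrite /lincomb summxE; apply: eq_bigr => m _; rewrite mxE. Qed.

Lemma rel_diff m k b y : U y -> differentiable (fun z => s m k z 0 b) y.
Proof. by move=> Uy; case: (s_rel m) => /(_ k b 1%N) [+ _] _ _ _ _; apply. Qed.

Lemma lincomb_diff k b y : U y -> differentiable (fun z => lincomb k z 0 b) y.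
Proof.
move=> Uy; under eq_fun do rewrite lincomb_comp.
apply: differentiable_big_sum => m; apply: differentiable_mul; last exact: rel_diff.
exact: differentiable_cst.
Qed.

Lemma partial_lincomb k b a y : U y ->
  partial_coord a (fun z => lincomb k z 0 b) y =
  \sum_(m < n) c m * partial_coord a (fun z => s m k z 0 b) y.
Proof.
move=> Uy; under eq_fun do rewrite lincomb_comp.
rewrite /partial_coord derive_big_sum => [|m]; last first.
  by apply: differentiable_mul; [exact: differentiable_cst | exact: rel_diff].
apply: eq_bigr => m _; rewrite derive_mul; [|exact: differentiable_cst|exact: rel_diff].
by rewrite derive_cst mulr0 addr0.
Qed.

Lemma lincomb_closed k : closed_form U (lincomb k).
Proof.
move=> y Uy a b; rewrite !partial_lincomb //; apply: eq_bigr => m _.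
by case: (s_rel m) => _ /(_ k y Uy a b) -> _ _ _.
Qed.

Lemma cov_pairing_lincomb k x u :
  cov_pairing (lincomb k x) u = \sum_(m < n) c m * cov_pairing (s m k x) u.
Proof. by rewrite cov_pairing_suml; apply: eq_bigr => m _; exact: cov_pairingZl. Qed.

Lemma lincomb_annihilates i y v : U y -> cov_pairing (w i y) v = 0 ->
  cov_pairing (lincomb (widen_ord (leqnSn 3) i) y) v = 0.
Proof.
move=> Uy wv0; rewrite cov_pairing_lincomb big1 // => m _.
by case: (s_rel m) => _ _ /(_ i y v Uy wv0) -> _ _; rewrite mulr0.
Qed.

Lemma lincomb_curve y : U y -> cov_pairing (lincomb ord_max y) (X y) = 0.
Proof.
move=> Uy; rewrite cov_pairing_lincomb big1 // => m _.
by case: (s_rel m) => _ _ _ /(_ y Uy) -> _; rewrite mulr0.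
Qed.

Lemma lincomb_sum y : U y -> \sum_(k < 4) lincomb k y = 0.
Proof.
move=> Uy; rewrite exchange_big big1 // => m _.
by case: (s_rel m) => _ _ _ _ /(_ y Uy); rewrite -scaler_sumr => ->; rewrite scaler0.
Qed.

Lemma coef_lincomb i y : coef w X lincomb i y = \sum_(m < n) c m * coef w X (s m) i y.
Proof.
by rewrite /coef cov_pairing_lincomb mulr_suml; apply: eq_bigr => m _; rewrite mulrA.
Qed.

End LinearCombination.

Lemma exists_orthogonal2 (R : fieldType) (p q : 'I_3 -> R) :
  exists c : 'I_3 -> R, (exists m, c m != 0) /\
    \sum_(m < 3) c m * p m = 0 /\ \sum_(m < 3) c m * q m = 0.
Proof.
pose M : 'M[R]_(3, 2) := \matrix_(m < 3, j < 2) (if j == 0 then p m else q m).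
have : kermx M != 0.
  rewrite kermx_eq0; apply/negP => /eqP rkM.
  by have := rank_leq_col M; rewrite rkM.
move=> /rowV0Pn [v /sub_kermxP vM /rV0Pn [m vm]].
exists (fun m => v 0 m); split; first by exists m.
have vMj j : \sum_(m < 3) v 0 m * M m j = 0.
  by have := congr1 (fun A : 'M[R]_(1, 2) => A 0 j) vM; rewrite !mxE.
by split; [have := vMj 0 | have := vMj 1]; under eq_bigr do rewrite mxE.
Qed.

Unset Implicit Arguments.
Local Close Scope ring_scope.
Local Close Scope classical_set_scope.

Theorem theorem3 (R : realType) (U : set 'rV[R]_3)
    (w : 'I_3 -> 'rV[R]_3 -> 'rV[R]_3) (X : 'rV[R]_3 -> 'rV[R]_3) :
  open U -> connected U -> is_3surf1curve_web U w X -> web_nondegenerate U w X ->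
  web_rank_le U w X 2.
Proof.
move=> U_open U_conn [w_fol X_fol] web_nd s s_rel.
have w_smooth i : smooth_field U (w i) by case: (w_fol i).
have [[x0 Ux0]|U0] := pselect (exists x, U x); last first.
  exists (fun=> 1%R); split; first by exists ord0; rewrite oner_neq0.
  by move=> k x Ux; case: U0; exists x.
have [c [c_neq0 [c0 c1]]] := exists_orthogonal2
  (fun m => coef w X (s m) o0 x0) (fun m => coef w X (s m) o1 x0).
exists c; split => //.
apply: (tau_vanishes U_open w_smooth X_fol.1 web_nd _ _ _
  (lincomb_curve c s_rel) (lincomb_sum c s_rel) U_conn Ux0); rewrite ?coef_lincomb //.
- by move=> i b y Uy; exact: lincomb_diff.
- by move=> i; exact: lincomb_closed.
- by move=> i y v Uy; exact: lincomb_annihilates.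
Qed.
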